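(* Let $n,r$ be integers with $n\ge r+2\ge 2$, let $\sigma\colon\{1,\dots,r\}\to\{1,\dots,n-1\}$ be injective, and let $\Delta'=(x^{(\sigma(1))}_1,\dots,x^{(\sigma(r))}_r)$. There is a constant $C>0$ such that for every $w$ in the commutator subgroup $[F_r,F_r]$ of $F_r=F(t_1,\dots,t_r)$, $$\mathrm{Area}\big(w(\Delta)\,w(\Delta')^{-1}\big)\le C\cdot|w|^2.$$
   Context: For $\alpha\in\{1,\dots,n\}$ let $F^{(\alpha)}$ be the free group on $a^{(\alpha)}_1,\dots,a^{(\alpha)}_r$, let $\psi\colon F^{(1)}\times\cdots\times F^{(n)}\to\mathbb Z^r$ send each $a^{(\alpha)}_j$ to $e_j$, and $K=\ker\psi$. For $\alpha\in\{1,\dots,n-1\}$, $j\in\{1,\dots,r\}$, $x^{(\alpha)}_j=a^{(\alpha)}_j(a^{(n)}_j)^{-1}$; $X$ is the set of all $x^{(\alpha)}_j$ and $F(X)$ the abstract free group on it; $\Delta=(x^{(1)}_1,x^{(2)}_2,\dots,x^{(r)}_r)$. For $w\in F_r=F(t_1,\dots,t_r)$ and a tuple $S=(s_1,\dots,s_r)$ of elements of $F(X)$, $w(S)\in F(X)$ is the image of $w$ under $t_i\mapsto s_i$; $|w|$ is the word length of $w$ in $F_r$. $[g,h]=ghg^{-1}h^{-1}$. Let $\mathcal R=\mathcal R_1\cup\mathcal R_2$ with $\mathcal R_1=\{[x^{(\alpha)}_i,x^{(\beta)}_i]:\alpha\ne\beta\}$, $\mathcal R_2=\{[x^{(\alpha)}_i,x^{(\beta)}_j(x^{(\gamma)}_j)^{-1}]: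 i\neq j,\ \alpha,\beta,\gamma\in\{1,\dots,n-1\}\text{ pairwise distinct}\}$, a set of defining relators for $K$ on $X$. $\mathrm{Area}(u)$ for $u\in F(X)$ is the least number of conjugates of elements of $\mathcal R^{\pm1}$ whose product equals $u$ in $F(X)$. *)

From mathcomp Require Import all_boot all_order all_algebra.
Set Implicit Arguments. Unset Strict Implicit. Unset Printing Implicit Defensive.
Import Order.TTheory GRing.Theory Num.Theory.

(* A word over an alphabet A: a list of letters (a, e), where e = true means
   the generator a and e = false means its inverse a^{-1}. *)
Definition word (A : Type) := seq (A * bool).

Section FreeWords.
Variable A : eqType.

Definition inv_letter (l : A * bool) : A * bool := (l.1, ~~ l.2).
Definition inv_word (w : word A) : word A := rev (map inv_letter w).

Definition reduce (w : word A) : word A :=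
  foldr (fun l acc => match acc with
                      | b :: t => if b == inv_letter l then t else l :: acc
                      | [::] => [:: l] end) [::] w.

Definition freely_eq (u v : word A) : Prop := reduce u = reduce v.

Definition comm (g h : word A) : word A := g ++ h ++ inv_word g ++ inv_word h.

Definition gen (a : A) : word A := [:: (a, true)].
End FreeWords.

(* ---------- F_r = F(t_1,...,t_r): letters t_i are encoded by i : nat, 1 <= i <= r *)
Definition valid_t (r : nat) (w : word nat) : bool :=
  all (fun l => (0 < l.1 <= r)%N) w.

(* w belongs to the commutator subgroup [F_r,F_r]: w is (freely) a product of
   commutators of elements of F_r (these generate [F_r,F_r] and the set of
   commutators is closed under inversion). *)
Definition in_commutator_subgroup (r : nat) (w : word nat) : Prop :=
  exists l : seq (word nat * word nat),
    (forall p, p \in l -> valid_t r p.1 && valid_t r p.2) /\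
    freely_eq w (flatten [seq comm p.1 p.2 | p <- l]).

(* ---------- F(X): x^{(alpha)}_j is encoded by (alpha, j), 1<=alpha<=n-1, 1<=j<=r *)
Definition validX (n r : nat) (w : word (nat * nat)) : bool :=
  all (fun l => (0 < l.1.1 < n) && (0 < l.1.2 <= r))%N w.

Definition subst (S : nat -> word (nat * nat)) (w : word nat) : word (nat * nat) :=
  flatten [seq (if l.2 then S l.1 else inv_word (S l.1)) | l <- w].

Definition Delta : nat -> word (nat * nat) := fun i => gen (i, i).
Definition Delta' (sigma : nat -> nat) : nat -> word (nat * nat) :=
  fun i => gen (sigma i, i).

Definition in_R1 (n r : nat) (rho : word (nat * nat)) : Prop :=
  exists i a b, (0 < i <= r)%N /\ (0 < a < n)%N /\ (0 < b < n)%N /\ a <> b /\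
    rho = comm (gen (a, i)) (gen (b, i)).

Definition in_R2 (n r : nat) (rho : word (nat * nat)) : Prop :=
  exists i j a b c, (0 < i <= r)%N /\ (0 < j <= r)%N /\ i <> j /\
    (0 < a < n)%N /\ (0 < b < n)%N /\ (0 < c < n)%N /\
    a <> b /\ a <> c /\ b <> c /\
    rho = comm (gen (a, i)) (gen (b, j) ++ inv_word (gen (c, j))).

Definition in_R (n r : nat) (rho : word (nat * nat)) : Prop :=
  in_R1 n r rho \/ in_R2 n r rho.

Definition prod_of_conjugates (n r : nat) (u : word (nat * nat)) (k : nat) : Prop :=
  exists l : seq (word (nat * nat) * word (nat * nat) * bool),
    size l = k /\
    (forall t, t \in l -> validX n r t.1.1 /\ in_R n r t.1.2) /\
    freely_eq u (flatten [seq t.1.1 ++ (if t.2 then t.1.2 else inv_word t.1.2)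
                                   ++ inv_word t.1.1 | t <- l]).

(* Area(u) <= N : the least number of conjugates of relators^{+-1} whose
   product is u is at most N, i.e. some such representation uses <= N factors. *)
Definition area_le (n r : nat) (u : word (nat * nat)) (N : rat) : Prop :=
  exists k : nat, prod_of_conjugates n r u k /\ (k%:R <= N)%R.

From mathcomp Require Import all_boot all_order all_algebra zify.
Import Order.TTheory GRing.Theory Num.Theory.
Set Implicit Arguments. Unset Strict Implicit. Unset Printing Implicit Defensive.

(* For tau injective from {1..r} to {1..n-1}, let w(tau) be w evaluated at
   (x^{(tau 1)}_1, ..., x^{(tau r)}_r), i.e. [subst (assign tau) w], so that
   w(Delta) = w(id) and w(Delta') = w(sigma).  Changing tau at one index i to
   a value alpha outside its image costs at most |w|^2 relators:
   d = x^{(alpha)}_i (x^{(tau i)}_i)^-1 commutes with every x^{(tau j)}_j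
   modulo one relator (of R_1 if j = i, of R_2 otherwise), substituting
   x^{(alpha)}_i = d x^{(tau i)}_i creates one factor d^{+-1} per occurrence
   of t_i, and these are pushed to the front past at most |w| letters each.
   The collected power of d is the exponent sum of t_i in w, which vanishes on
   [F_r,F_r].  As n - 1 > r there is always a spare value, so id is turned
   into sigma by at most 2r such moves. *)

Section FreeReduction.
Variable A : eqType.
Implicit Types (u v w : word A) (l : A * bool).

Definition reduce_step l (acc : word A) : word A :=
  match acc with
  | b :: t => if b == inv_letter l then t else l :: acc
  | [::] => [:: l]
  end.

Fixpoint reduced w : bool :=
  if w is l :: (l' :: _) as t then (l' != inv_letter l) && reduced t else true.

Lemma inv_letterK : involutive (@inv_letter A).
Proof. by case=> a e; rewrite /inv_letter /= negbK. Qed.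

Lemma reduced_behead l w : reduced (l :: w) -> reduced w.
Proof. by case: w => //= l' w /andP[]. Qed.

Lemma reduced_step l w : reduced w -> reduced (reduce_step l w).
Proof.
case: w => //= b t red_bt; case: ifP => [_|b_l]; first exact: reduced_behead red_bt.
by rewrite /= b_l.
Qed.

Lemma reduced_foldr acc w : reduced acc -> reduced (foldr reduce_step acc w).
Proof. by move=> red_acc; elim: w => //= l w; apply: reduced_step. Qed.

Lemma reduced_reduce w : reduced (reduce w).
Proof. exact: reduced_foldr. Qed.

Lemma reduce_stepK l w : reduced w -> reduce_step l (reduce_step (inv_letter l) w) = w.
Proof.
case: w => [|b t] /=; first by rewrite eqxx.
rewrite inv_letterK; case: eqP => [->|_] red_bt; last by rewrite /= eqxx.
by case: t red_bt => [|c t] //= /andP[/negbTE ->].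
Qed.

Lemma reduce_step_foldr acc l w : reduced acc ->
  reduce_step l (foldr reduce_step acc w) = foldr reduce_step acc (reduce_step l w).
Proof.
case: w => [|b t] //= red_acc; case: eqP => [->|_] //=.
by rewrite reduce_stepK //; apply: reduced_foldr.
Qed.

Lemma foldr_reduce acc w : reduced acc ->
  foldr reduce_step acc w = foldr reduce_step acc (reduce w).
Proof. by move=> red_acc; elim: w => //= l w ->; rewrite reduce_step_foldr. Qed.

Lemma reduced_reduceE w : reduced w -> reduce w = w.
Proof.
elim: w => //= l w IHw red_lw; rewrite IHw; last exact: reduced_behead red_lw.
by case: w red_lw {IHw} => //= l' w /andP[/negbTE ->].
Qed.

Lemma reduce_cat u v : reduce (u ++ v) = foldr reduce_step (reduce v) u.
Proof. exact: foldr_cat. Qed.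

Lemma reduce_catr u v : reduce (u ++ v) = reduce (u ++ reduce v).
Proof. by rewrite !reduce_cat (reduced_reduceE (reduced_reduce v)). Qed.

Lemma reduce_catl u v : reduce (u ++ v) = reduce (reduce u ++ v).
Proof. by rewrite !reduce_cat; apply/foldr_reduce/reduced_reduce. Qed.

Lemma inv_word_cat u v : inv_word (u ++ v) = inv_word v ++ inv_word u.
Proof. by rewrite /inv_word map_cat rev_cat. Qed.

Lemma inv_wordK : involutive (@inv_word A).
Proof. by move=> w; rewrite /inv_word map_rev revK -map_comp (eq_map inv_letterK) map_id. Qed.

Lemma reduce_catV w : reduce (w ++ inv_word w) = [::].
Proof.
elim: w => //= l w IHw.
by rewrite /inv_word rev_cons -cats1 catA reduce_catl IHw /= eqxx.
Qed.

Lemma freely_eq_trans v u w : freely_eq u v -> freely_eq v w -> freely_eq u w.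
Proof. exact: etrans. Qed.

Lemma freely_eq_sym u v : freely_eq u v -> freely_eq v u.
Proof. exact: esym. Qed.

Lemma freely_eq_cat u u' v v' :
  freely_eq u u' -> freely_eq v v' -> freely_eq (u ++ v) (u' ++ v').
Proof.
by rewrite /freely_eq reduce_catl reduce_catr => -> ->; rewrite -reduce_catr -reduce_catl.
Qed.

Lemma freely_eq_catl u v v' : freely_eq v v' -> freely_eq (u ++ v) (u ++ v').
Proof. exact: freely_eq_cat. Qed.

Lemma freely_eq_catr u u' v : freely_eq u u' -> freely_eq (u ++ v) (u' ++ v).
Proof. by move/freely_eq_cat; apply. Qed.

Lemma freely_eq_catV u w v : freely_eq (u ++ w ++ inv_word w ++ v) (u ++ v).
Proof. by apply: freely_eq_catl; rewrite /freely_eq catA reduce_catl reduce_catV. Qed.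

Lemma freely_eq_Vcat u w v : freely_eq (u ++ inv_word w ++ w ++ v) (u ++ v).
Proof. by have := freely_eq_catV u (inv_word w) v; rewrite inv_wordK. Qed.

Lemma freely_eq_inv u v : freely_eq u v -> freely_eq (inv_word u) (inv_word v).
Proof.
move=> eq_uv; have := freely_eq_catV (inv_word u) v [::]; rewrite !cats0 => /freely_eq_sym.
move/freely_eq_trans; apply.
apply: freely_eq_trans (freely_eq_Vcat [::] u (inv_word v)).
by apply: freely_eq_catl; apply: freely_eq_cat.
Qed.

End FreeReduction.

Section Weight.
Variables (A : eqType) (G : zmodType) (phi : A -> G).
Implicit Types (u v w : word A) (l : A * bool).
Local Open Scope ring_scope.

Definition letter_weight l : G := if l.2 then phi l.1 else - phi l.1.

Definition weight w : G := \sum_(l <- w) letter_weight l.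

Lemma weight_cat u v : weight (u ++ v) = weight u + weight v.
Proof. exact: big_cat. Qed.

Lemma letter_weight_inv l : letter_weight (inv_letter l) = - letter_weight l.
Proof. by case: l => a []; rewrite /letter_weight /= ?opprK. Qed.

Lemma weight_inv_word w : weight (inv_word w) = - weight w.
Proof.
rewrite /weight /inv_word big_rev big_map -sumrN.
by apply: eq_bigr => l _; rewrite letter_weight_inv.
Qed.

Lemma weight_reduce w : weight (reduce w) = weight w.
Proof.
elim: w => [|l w IHw] //; rewrite [weight (l :: w)]/weight big_cons -/(weight w) -IHw.
rewrite [reduce _]/= -/(reduce w) /weight; case: (reduce w) => [|b t] /=.
  by rewrite big_seq1 big_nil addr0.
by case: eqP => [->|_]; rewrite big_cons // letter_weight_inv addNKr.
Qed.

Lemma freely_eq_weight u v : freely_eq u v -> weight u = weight v.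
Proof. by rewrite -weight_reduce -[weight v]weight_reduce => ->. Qed.

Lemma weight_comm u v : weight (comm u v) = 0.
Proof.
by rewrite /comm !weight_cat !weight_inv_word addrCA addNKr subrr.
Qed.

End Weight.

Lemma weight_commutator_subgroup (G : zmodType) (phi : nat -> G) r w :
  in_commutator_subgroup r w -> weight phi w = 0%R.
Proof.
case=> cs [_ /freely_eq_weight ->]; elim: cs => [|c cs IHcs] /=.
  by rewrite /weight big_nil.
by rewrite weight_cat weight_comm IHcs addr0.
Qed.

Definition letter_exponent (i : nat) : nat * bool -> int :=
  letter_weight (fun j => Posz (j == i)).

Definition exponent_sum (i : nat) : word nat -> int := weight (fun j => Posz (j == i)).

Lemma exponent_sum_cons i l w :
  exponent_sum i (l :: w) = (letter_exponent i l + exponent_sum i w)%R.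
Proof. exact: big_cons. Qed.

Lemma letter_exponent_le1 i l : (absz (letter_exponent i l) <= 1)%N.
Proof. by case: l => j [] /=; rewrite /letter_exponent /letter_weight /=; case: (j == i). Qed.

Lemma exponent_sum_le_size i w : (absz (exponent_sum i w) <= size w)%N.
Proof.
elim: w => [|l w IHw]; first by rewrite /exponent_sum /weight big_nil.
by have := letter_exponent_le1 i l; rewrite exponent_sum_cons /=; lia.
Qed.

Local Notation X := (nat * nat)%type.

Section Area.
Variables n r : nat.
Local Notation poc := (prod_of_conjugates n r).
Implicit Types (u v w g h : word X).

Lemma validX_cat u v : validX n r (u ++ v) = validX n r u && validX n r v.
Proof. exact: all_cat. Qed.

Lemma validX_inv_word u : validX n r (inv_word u) = validX n r u.
Proof. by rewrite /validX /inv_word all_rev all_map. Qed.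

Lemma validX_gen a j : validX n r (gen (a, j)) = (0 < a < n) && (0 < j <= r).
Proof. by rewrite /validX /= andbT. Qed.

Definition conjugate_word (c : word X * word X * bool) : word X :=
  c.1.1 ++ (if c.2 then c.1.2 else inv_word c.1.2) ++ inv_word c.1.1.

Lemma poc_freely_eq u v k : freely_eq u v -> poc u k -> poc v k.
Proof.
move=> eq_uv [cs [size_cs [cs_ok eq_u]]]; exists cs; do !split => //.
exact: freely_eq_trans (freely_eq_sym eq_uv) eq_u.
Qed.

Lemma poc_nil : poc [::] 0.
Proof. by exists [::]. Qed.

Lemma poc_relator rho : in_R n r rho -> poc rho 1.
Proof.
move=> R_rho; exists [:: ([::], rho, true)]; split=> //; split.
  by move=> c; rewrite inE => /eqP ->.
by rewrite /freely_eq /= !cats0.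
Qed.

Lemma poc_cat u v k1 k2 : poc u k1 -> poc v k2 -> poc (u ++ v) (k1 + k2).
Proof.
move=> [cs1 [<- [ok1 eq1]]] [cs2 [<- [ok2 eq2]]].
exists (cs1 ++ cs2); rewrite size_cat map_cat flatten_cat; split=> //; split.
  by move=> c; rewrite mem_cat => /orP[/ok1|/ok2].
exact: freely_eq_cat.
Qed.

Lemma freely_eq_conj_flatten g cs :
  freely_eq (g ++ flatten (map conjugate_word cs) ++ inv_word g)
            (flatten [seq conjugate_word (g ++ c.1.1, c.1.2, c.2) | c <- cs]).
Proof.
elim: cs => [|c cs IHcs] /=; first exact: reduce_catV.
have -> : conjugate_word (g ++ c.1.1, c.1.2, c.2) = g ++ conjugate_word c ++ inv_word g.
  by rewrite /conjugate_word /= inv_word_cat -!catA.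
have := freely_eq_Vcat (g ++ conjugate_word c) g (flatten (map conjugate_word cs) ++ inv_word g).
rewrite -!catA => /freely_eq_sym /freely_eq_trans; apply.
by have := freely_eq_catl (g ++ conjugate_word c ++ inv_word g) IHcs; rewrite -!catA.
Qed.

Lemma poc_conj g u k : validX n r g -> poc u k -> poc (g ++ u ++ inv_word g) k.
Proof.
move=> g_ok [cs [<- [ok eq_u]]].
exists [seq (g ++ c.1.1, c.1.2, c.2) | c <- cs]; rewrite size_map; split=> //; split.
  move=> _ /mapP[c /ok[c_ok R_c] ->]; split=> //=.
  by rewrite validX_cat g_ok.
rewrite -map_comp; apply: freely_eq_trans (freely_eq_conj_flatten g cs).
exact/freely_eq_catl/freely_eq_catr.
Qed.

Lemma inv_word_flatten_conj cs :
  inv_word (flatten (map conjugate_word cs)) =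
  flatten [seq conjugate_word (c.1, ~~ c.2) | c <- rev cs].
Proof.
elim: cs => [|c cs IHcs] //=.
rewrite inv_word_cat IHcs rev_cons map_rcons -cats1 flatten_cat /= cats0.
congr (_ ++ _); rewrite /conjugate_word /= !inv_word_cat inv_wordK -catA.
by case: c.2; rewrite ?inv_wordK.
Qed.

Lemma poc_inv u k : poc u k -> poc (inv_word u) k.
Proof.
move=> [cs [<- [ok eq_u]]].
exists [seq (c.1, ~~ c.2) | c <- rev cs]; rewrite size_map size_rev; split=> //; split.
  by move=> t /mapP[c]; rewrite mem_rev => /ok ok_c ->.
by rewrite -map_comp -inv_word_flatten_conj; apply: freely_eq_inv.
Qed.

Definition area_eq N u v := exists2 k, (k <= N)%N & poc (u ++ inv_word v) k.

Lemma area_eqW N M u v : (N <= M)%N -> area_eq N u v -> area_eq M u v.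
Proof. by move=> le_NM [k le_kN poc_k]; exists k => //; apply: leq_trans le_NM. Qed.

Lemma freely_eq_area u v : freely_eq u v -> area_eq 0 u v.
Proof.
move=> eq_uv; exists 0 => //; apply: poc_freely_eq poc_nil.
by rewrite /freely_eq reduce_catl eq_uv -reduce_catl reduce_catV.
Qed.

Lemma area_eq_refl N u : area_eq N u u.
Proof. exact: area_eqW (leq0n N) (freely_eq_area erefl). Qed.

Lemma area_eq_sym N u v : area_eq N u v -> area_eq N v u.
Proof. by case=> k le_kN /poc_inv; rewrite inv_word_cat inv_wordK; exists k. Qed.

Lemma area_eq_trans N M v u w : area_eq N u v -> area_eq M v w -> area_eq (N + M) u w.
Proof.
move=> [k1 le1 poc1] [k2 le2 poc2]; exists (k1 + k2); first exact: leq_add.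
apply: poc_freely_eq (poc_cat poc1 poc2); rewrite -catA.
exact: (freely_eq_Vcat u v (inv_word w)).
Qed.

Lemma area_eq_freely_l u' N u v : freely_eq u u' -> area_eq N u' v -> area_eq N u v.
Proof. by move/freely_eq_area/area_eq_trans; apply. Qed.

Lemma area_eq_freely_r v' N u v : area_eq N u v' -> freely_eq v' v -> area_eq N u v.
Proof.
by move=> eq_uv' /freely_eq_area eq_v'v; have := area_eq_trans eq_uv' eq_v'v; rewrite addn0.
Qed.

Lemma area_eq_catl g N u v : validX n r g -> area_eq N u v -> area_eq N (g ++ u) (g ++ v).
Proof.
move=> g_ok [k le_kN /(poc_conj g_ok) poc_k]; exists k => //.
by rewrite inv_word_cat -!catA in poc_k *.
Qed.

Lemma area_eq_catr h N u v : area_eq N u v -> area_eq N (u ++ h) (v ++ h).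
Proof.
move=> [k le_kN poc_k]; exists k => //; apply: poc_freely_eq poc_k.
by rewrite inv_word_cat -catA; apply: freely_eq_sym; apply: freely_eq_catV.
Qed.

Lemma area_eq_relator g h : in_R n r (comm g h) -> area_eq 1 (g ++ h) (h ++ g).
Proof. by move/poc_relator; exists 1; rewrite // inv_word_cat -!catA. Qed.

End Area.

Section IntPower.
Variable A : eqType.
Implicit Types (d : word A) (e : int).
Local Open Scope ring_scope.

Definition wpow d e : word A :=
  flatten (nseq (absz e) (if 0 <= e then d else inv_word d)).

Lemma wpow0 d : wpow d 0 = [::].
Proof. by []. Qed.

Lemma wpow_cons d e : freely_eq (d ++ wpow d e) (wpow d (1 + e)).
Proof.
rewrite /wpow; case: (lerP 0 e) => [e_ge0|e_lt0].
  by rewrite ler_wpDl // (_ : absz (1 + e) = (absz e).+1) //; lia.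
rewrite (_ : absz e = (absz (1 + e)).+1) /=; last by lia.
apply: freely_eq_trans (freely_eq_catV [::] d _) _.
case: (ltrP (1 + e) 0) => [//|ge0].
by rewrite (_ : absz (1 + e) = 0%N) //; lia.
Qed.

Lemma wpow_sign d (b : bool) e :
  freely_eq ((if b then d else inv_word d) ++ wpow d e) (wpow d ((if b then 1 else -1) + e)).
Proof.
case: b; first exact: wpow_cons.
have := wpow_cons d (-1 + e); rewrite addrA subrr add0r => /freely_eq_sym eq_e.
apply: freely_eq_trans (freely_eq_catl _ eq_e) _.
exact: (freely_eq_Vcat [::] d).
Qed.

End IntPower.

Section Commute.
Variables n r : nat.
Local Notation area_eq := (area_eq n r).
Implicit Types (d e g : word X).

Lemma area_eq_commute_inv N g e : validX n r e ->
  area_eq N (g ++ e) (e ++ g) -> area_eq N (g ++ inv_word e) (inv_word e ++ g).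
Proof.
move=> e_ok comm_ge; apply: area_eq_sym.
have e'_ok : validX n r (inv_word e) by rewrite validX_inv_word.
apply: (@area_eq_freely_l _ _ (inv_word e ++ g ++ e ++ inv_word e)).
  by have := freely_eq_catV (inv_word e ++ g) e [::]; rewrite !cats0 -!catA => /freely_eq_sym.
apply: (@area_eq_freely_r _ _ (inv_word e ++ e ++ g ++ inv_word e)).
  by have := area_eq_catr (inv_word e) (area_eq_catl e'_ok comm_ge); rewrite -!catA.
exact: (freely_eq_Vcat [::] e).
Qed.

Lemma area_eq_commute_nseq m g e : validX n r e ->
  area_eq 1 (g ++ e) (e ++ g) ->
  area_eq m (g ++ flatten (nseq m e)) (flatten (nseq m e) ++ g).
Proof.
move=> e_ok comm_ge; elim: m => [|m IHm] /=; first by apply: freely_eq_area; rewrite cats0.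
have := area_eq_catr (flatten (nseq m e)) comm_ge; rewrite -!catA => comm_head.
by have := area_eq_trans comm_head (area_eq_catl e_ok IHm).
Qed.

Lemma area_eq_commute_wpow (k : int) g d : validX n r d ->
  area_eq 1 (g ++ d) (d ++ g) -> area_eq (absz k) (g ++ wpow d k) (wpow d k ++ g).
Proof.
move=> d_ok comm_gd; rewrite /wpow; case: ifP => _; apply: area_eq_commute_nseq => //.
  by rewrite validX_inv_word.
exact: area_eq_commute_inv.
Qed.

End Commute.

Definition subst_letter (S : nat -> word X) (l : nat * bool) : word X :=
  if l.2 then S l.1 else inv_word (S l.1).

Lemma subst_cons S l w : subst S (l :: w) = subst_letter S l ++ subst S w.
Proof. by []. Qed.

Lemma eq_in_subst r (S S' : nat -> word X) w :
  (forall j, (0 < j <= r)%N -> S j = S' j) -> valid_t r w -> subst S w = subst S' w.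
Proof.
move=> eq_SS'; elim: w => [|[j b] w IHw] //= /andP[j_ok w_ok].
by rewrite !subst_cons IHw // /subst_letter /= eq_SS'.
Qed.

Definition assign (tau : nat -> nat) : nat -> word X := fun j => gen (tau j, j).

Definition upd (tau : nat -> nat) i a : nat -> nat := fun j => if j == i then a else tau j.

Lemma validX_subst_letter n r tau l :
  (0 < l.1 <= r)%N -> (0 < tau l.1 < n)%N -> validX n r (subst_letter (assign tau) l).
Proof.
by move=> l_ok tau_ok; rewrite /subst_letter; case: l.2; rewrite ?validX_inv_word validX_gen tau_ok.
Qed.

Section Update.
Variables (n r : nat) (tau : nat -> nat) (i alpha : nat).
Hypothesis tau_range : forall j, (0 < j <= r)%N -> (0 < tau j < n)%N.
Hypothesis tau_inj :
  forall j j', (0 < j <= r)%N -> (0 < j' <= r)%N -> tau j = tau j' -> j = j'.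
Hypothesis i_range : (0 < i <= r)%N.
Hypothesis alpha_range : (0 < alpha < n)%N.
Hypothesis alpha_unused : forall j, (0 < j <= r)%N -> tau j <> alpha.

Local Notation area_eq := (area_eq n r).
Let x_new := gen (alpha, i).
Let x_old := assign tau i.
Let d := x_new ++ inv_word x_old.

Lemma validX_assign j : (0 < j <= r)%N -> validX n r (assign tau j).
Proof. by move=> j_ok; rewrite validX_gen tau_range. Qed.

Let x_new_ok : validX n r x_new. Proof. by rewrite validX_gen alpha_range. Qed.
Let x_old_ok : validX n r x_old. Proof. exact: validX_assign. Qed.
Let d_ok : validX n r d. Proof. by rewrite validX_cat validX_inv_word x_new_ok x_old_ok. Qed.

Let d_x_old : freely_eq (d ++ x_old) x_new.
Proof. by have := freely_eq_Vcat x_new x_old [::]; rewrite !cats0 -catA. Qed.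

Lemma commute_assign j : (0 < j <= r)%N -> area_eq 1 (assign tau j ++ d) (d ++ assign tau j).
Proof.
move=> j_ok; have [->|ne_ji] := eqVneq j i.
  have R1 : in_R n r (comm x_old x_new).
    by left; exists i, (tau i), alpha; do !split => //; [apply: tau_range | apply: alpha_unused].
  apply: (@area_eq_freely_r _ _ (x_new ++ x_old ++ inv_word x_old)).
    by have := area_eq_catr (inv_word x_old) (area_eq_relator R1); rewrite -!catA.
  apply: freely_eq_trans (freely_eq_sym d_x_old).
  by have := freely_eq_catV x_new x_old [::]; rewrite !cats0.
apply: area_eq_relator; right; exists j, i, (tau j), alpha, (tau i); do !split => //.
- exact/eqP.
- exact: tau_range.
- exact: tau_range.
- exact: alpha_unused.
- by move/(tau_inj j_ok i_range)/eqP; rewrite (negbTE ne_ji).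
- by move=> eq_alpha; apply: (alpha_unused i_range).
Qed.

Lemma commute_subst_letter_wpow l (k : int) : (0 < l.1 <= r)%N ->
  area_eq (absz k) (subst_letter (assign tau) l ++ wpow d k)
                   (wpow d k ++ subst_letter (assign tau) l).
Proof.
move=> l_ok; apply: area_eq_commute_wpow => //; rewrite /subst_letter; case: l.2.
  exact: commute_assign.
apply/area_eq_sym/area_eq_commute_inv; first exact: validX_assign.
exact/area_eq_sym/commute_assign.
Qed.

Lemma push_letter l (k : int) N : (0 < l.1 <= r)%N -> (absz k <= N)%N ->
  (absz (letter_exponent i l + k)%R <= N)%N ->
  area_eq N (subst_letter (assign (upd tau i alpha)) l ++ wpow d k)
            (wpow d (letter_exponent i l + k) ++ subst_letter (assign tau) l).
Proof.
case: l => j b /= j_ok le_kN; rewrite /letter_exponent /letter_weight /=.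
have [-> {j j_ok}|ne_ji] := eqVneq j i; last first.
  rewrite (_ : (if b then _ else _) = 0%R); last by case: b; rewrite ?oppr0.
  rewrite add0r => _; apply: area_eqW le_kN _.
  have -> : subst_letter (assign (upd tau i alpha)) (j, b) = subst_letter (assign tau) (j, b).
    by rewrite /subst_letter /assign /upd /= (negbTE ne_ji).
  exact: (@commute_subst_letter_wpow (j, b) k j_ok).
rewrite /subst_letter /= -/x_old.
have -> : assign (upd tau i alpha) i = x_new by rewrite /assign /upd eqxx.
case: b => le_k'N.
  apply: (@area_eq_freely_l _ _ (d ++ x_old ++ wpow d k)).
    by rewrite catA; apply/freely_eq_catr/freely_eq_sym.
  apply: (@area_eq_freely_r _ _ (d ++ wpow d k ++ x_old)).
    exact/area_eq_catl/(area_eqW le_kN)/(@commute_subst_letter_wpow (i, true) k i_range).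
  by rewrite catA; apply/freely_eq_catr/(wpow_sign d true).
apply: (@area_eq_freely_l _ _ (inv_word x_old ++ wpow d (-1 + k))).
  apply: freely_eq_trans (_ : freely_eq _ (inv_word x_old ++ inv_word d ++ wpow d k)) _.
    rewrite /d inv_word_cat inv_wordK -!catA.
    exact/freely_eq_sym/(freely_eq_Vcat [::] x_old).
  exact/freely_eq_catl/(wpow_sign d false).
exact/(area_eqW le_k'N)/(@commute_subst_letter_wpow (i, false) _ i_range).
Qed.

Lemma push_subst w : valid_t r w ->
  area_eq (size w ^ 2) (subst (assign (upd tau i alpha)) w)
                       (wpow d (exponent_sum i w) ++ subst (assign tau) w).
Proof.
elim: w => [|l w IHw].
  by rewrite /exponent_sum /weight big_nil => _; apply: area_eq_refl.
move=> /andP[l_ok w_ok]; rewrite !subst_cons exponent_sum_cons.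
have y_ok : validX n r (subst_letter (assign (upd tau i alpha)) l).
  apply: (validX_subst_letter l_ok); rewrite /upd.
  by case: eqP => _; [exact: alpha_range | exact: tau_range].
have le_w := exponent_sum_le_size i w; have le_l := letter_exponent_le1 i l.
have le_e : (absz (letter_exponent i l + exponent_sum i w)%R <= (size w).+1)%N by lia.
have := area_eq_catr (subst (assign tau) w) (push_letter l_ok (leqW le_w) le_e).
rewrite -!catA => push.
have := area_eq_trans (area_eq_catl y_ok (IHw w_ok)) push.
by apply: area_eqW; rewrite /= -!mulnn; nia.
Qed.

Lemma area_eq_subst_upd w : valid_t r w -> exponent_sum i w = 0%R ->
  area_eq (size w ^ 2) (subst (assign (upd tau i alpha)) w) (subst (assign tau) w).
Proof. by move=> w_ok w_bal; have := push_subst w_ok; rewrite w_bal wpow0. Qed.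

End Update.

Definition admissible n r (tau : nat -> nat) : Prop :=
  (forall j, (0 < j <= r)%N -> (0 < tau j < n)%N) /\
  (forall j j', (0 < j <= r)%N -> (0 < j' <= r)%N -> tau j = tau j' -> j = j').

Lemma admissible_upd n r tau i a : admissible n r tau -> (0 < a < n)%N ->
  (forall j, (0 < j <= r)%N -> tau j <> a) -> admissible n r (upd tau i a).
Proof.
move=> [tau_range tau_inj] a_range a_unused; split=> [j j_ok|j j' j_ok j'_ok]; rewrite /upd.
  by case: eqP => _; [exact: a_range | exact: tau_range].
case: eqP => [-> | ne_ji]; case: eqP => [-> | ne_j'i] // eq_tau.
- by case: (a_unused j' j'_ok).
- by case: (a_unused j j_ok).
- exact: tau_inj.
Qed.

Lemma exists_unused n r tau : (r + 2 <= n)%N ->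
  (forall j, (0 < j <= r)%N -> (0 < tau j < n)%N) ->
  exists2 a, (0 < a < n)%N & forall j, (0 < j <= r)%N -> tau j <> a.
Proof.
move=> n_large tau_range.
have : ~~ all [in map tau (iota 1 r)] (iota 1 n.-1).
  apply/negP => /allP/(uniq_leq_size (iota_uniq 1 n.-1)).
  by rewrite size_iota size_map size_iota; lia.
rewrite -has_predC => /hasP[a]; rewrite mem_iota => a_range /= a_unused.
exists a; first lia.
move=> j j_ok tau_j; move: a_unused; rewrite -tau_j map_f //.
by rewrite mem_iota; lia.
Qed.

Section Chain.
Variables (n r : nat) (w : word nat).
Hypothesis n_large : (r + 2 <= n)%N.
Hypothesis w_ok : valid_t r w.
Hypothesis w_balanced : forall i, exponent_sum i w = 0%R.
Local Notation area_eq := (area_eq n r).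

Lemma release_value tau a : admissible n r tau -> exists tau1, [/\ admissible n r tau1,
    forall j, (0 < j <= r)%N -> tau1 j <> a,
    forall j, tau j != a -> tau1 j = tau j
  & area_eq (size w ^ 2) (subst (assign tau1) w) (subst (assign tau) w)].
Proof.
move=> [tau_range tau_inj].
have [/hasP[j j_in /eqP tau_j] | /hasPn a_unused] := boolP (has (fun j => tau j == a) (iota 1 r)).
  have j_ok : (0 < j <= r)%N by move: j_in; rewrite mem_iota; lia.
  have [s s_range s_unused] := exists_unused n_large tau_range.
  exists (upd tau j s); split.
  - exact: admissible_upd.
  - move=> j' j'_ok; rewrite /upd; case: eqP => [_ | ne_j'j] eq_a.
      by apply: (s_unused j j_ok); rewrite tau_j eq_a.
    by apply: ne_j'j; apply: tau_inj => //; rewrite tau_j.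
  - move=> j' tau_j'; rewrite /upd; case: eqP => [eq_j | //].
    by move: tau_j'; rewrite eq_j tau_j eqxx.
  - exact: area_eq_subst_upd.
exists tau; split=> //.
- move=> j j_ok eq_a; have j_in : j \in iota 1 r by rewrite mem_iota; lia.
  by have := a_unused j j_in; rewrite eq_a eqxx.
- exact: area_eq_refl.
Qed.

Lemma move_value tau i a : admissible n r tau -> (0 < i <= r)%N -> (0 < a < n)%N ->
  exists tau', [/\ admissible n r tau', tau' i = a,
    forall j, j != i -> tau j != a -> tau' j = tau j
  & area_eq (2 * size w ^ 2) (subst (assign tau') w) (subst (assign tau) w)].
Proof.
move=> tau_adm i_ok a_range.
have [tau1 [[tau1_range tau1_inj] a_unused keep1 area1]] := release_value a tau_adm.
exists (upd tau1 i a); split.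
- exact: admissible_upd.
- by rewrite /upd eqxx.
- by move=> j /negbTE ne_ji tau_j; rewrite /upd ne_ji keep1.
- rewrite mul2n -addnn; apply: area_eq_trans area1.
  exact: area_eq_subst_upd.
Qed.

Variable sigma : nat -> nat.
Hypothesis sigma_adm : admissible n r sigma.

Lemma area_eq_subst_agree_above k tau : admissible n r tau ->
  (forall j, (k < j <= r)%N -> tau j = sigma j) ->
  area_eq (2 * k * size w ^ 2) (subst (assign tau) w) (subst (assign sigma) w).
Proof.
elim: k tau => [|k IHk] tau tau_adm agree.
  rewrite (@eq_in_subst r _ (assign sigma)) //; first exact: area_eq_refl.
  by move=> j j_ok; rewrite /assign agree.
have [le_rk | lt_kr] := leqP r k.
  apply: area_eqW (IHk tau tau_adm _); first by rewrite leq_mul2r leq_mul2l leqnSn !orbT.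
  by move=> j; lia.
have [sigma_range sigma_inj] := sigma_adm.
have i_ok : (0 < k.+1 <= r)%N by lia.
have [tau' [tau'_adm tau'_i keep area_tau']] := move_value tau_adm i_ok (sigma_range _ i_ok).
have agree' j : (k < j <= r)%N -> tau' j = sigma j.
  move=> j_ok; have [-> //|ne_ji] := eqVneq j k.+1.
  have j_ok' : (k.+1 < j <= r)%N by move/eqP: ne_ji; lia.
  have ne_sigma : sigma j != sigma k.+1.
    by apply: contra_neq ne_ji; apply: sigma_inj => //; lia.
  by rewrite keep ?agree.
have := area_eq_trans (area_eq_sym area_tau') (IHk _ tau'_adm agree').
by apply: area_eqW; rewrite mulnS mulnDl.
Qed.

End Chain.

Theorem lemma3p12 (n r : nat) (sigma : nat -> nat) :
  (r + 2 <= n)%N ->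
  (forall i, (0 < i <= r)%N -> (0 < sigma i < n)%N) ->
  (forall i j, (0 < i <= r)%N -> (0 < j <= r)%N -> sigma i = sigma j -> i = j) ->
  exists C : rat, (0 < C)%R /\
    forall w : word nat,
      valid_t r w -> reduce w = w -> in_commutator_subgroup r w ->
      area_le n r (subst Delta w ++ inv_word (subst (Delta' sigma) w))
              (C * ((size w) ^ 2)%:R)%R.
Proof.
move=> n_large sigma_range sigma_inj.
exists ((2 * r).+1)%:R%R; split=> [|w w_ok _ w_comm]; first by rewrite ltr0n.
have w_balanced i : exponent_sum i w = 0%R by apply: weight_commutator_subgroup w_comm.
have id_adm : admissible n r id by split=> [j j_ok | //]; lia.
have id_sigma j : (r < j <= r)%N -> id j = sigma j by lia.
have [k le_k area_k] :=
  area_eq_subst_agree_above n_large w_ok w_balanced (conj sigma_range sigma_inj) id_adm id_sigma.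
exists k; split; first exact: area_k.
by rewrite -natrM ler_nat (leq_trans le_k) // leq_mul2r leqnSn orbT.
Qed.
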